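(* Let $\mathcal{F}=(\omega,\{\tau_j\}_{j\in[\pm n]})$ and $\mathcal{F}'=(\omega',\{\tau'_j\}_{j\in[\pm n]})$ be regular facets-pairing structures on $\mathcal{C}^n$, with associated tuples of signed permutations $(\omega;\widetilde\sigma_1,\widetilde\sigma_{-1},\dots,\widetilde\sigma_n,\widetilde\sigma_{-n})$ and $(\omega';\widetilde\sigma'_1,\widetilde\sigma'_{-1},\dots,\widetilde\sigma'_n,\widetilde\sigma'_{-n})$. Then $\mathcal{F}$ and $\mathcal{F}'$ are equivalent if and only if these tuples are shuffled-conjugate, i.e. there is a signed permutation $S$ of $[\pm n]$ with $\omega=S^{-1}\omega' S$ and $\widetilde\sigma_j=S^{-1}\widetilde\sigma'_{S(j)}S$ for all $j\in[\pm n]$.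
   Context: Let $[\pm n]=\{\pm1,\dots,\pm n\}$ and $\mathcal{C}^n=\{x\in\mathbb{R}^n: -\tfrac14\le x_i\le\tfrac14\}$. For $1\le i\le n$, $\mathbf{F}(i)$ and $\mathbf{F}(-i)$ denote the facets of $\mathcal{C}^n$ lying in $\{x_i=\tfrac14\}$ and $\{x_i=-\tfrac14\}$. For $j_1,\dots,j_s\in[\pm n]$ with pairwise distinct absolute values, $\mathbf{F}(j_1,\dots,j_s)=\mathbf{F}(j_1)\cap\dots\cap\mathbf{F}(j_s)$, a codimension-$s$ face; every proper face has this form. A signed permutation is a bijection $\sigma$ of $[\pm n]$ with $\sigma(-k)=-\sigma(k)$; symmetries $h$ of $\mathcal{C}^n$ correspond bijectively to signed permutations $\sigma$ via $h(\mathbf{F}(k))=\mathbf{F}(\sigma(k))$. A facets-pairing structure on $\mathcal{C}^n$ is a pair $(\omega,\{\tau_j\})$ where $\omega$ is a bijection of $[\pm n]$ with $\omega\circ\omega=\mathrm{id}$ and $\tau_j:\mathbf{F}(j)\to\mathbf{F}(\omega(j))$ ($j\in[\pm n]$) are face-preserving homeomorphisms with $\tau_{\omega(j)}=\tau_j^{-1}$, such that for all $j,k$ with $|j|\ne|k|$, writing $\tau_j(\mathbf{F}(j,k))=\mathbf{F}(\omega(j),k')$ and $\tau_k(\mathbf{F}(j,k))=\mathbf{F}(j',\omega(k))$, one has $\tau_{k'}(\tau_j(p))=\tau_{j'}(\tau_k(p))$ for all $p\in\mathbf{F}(j,k)$. It is regular if each $\tau_j$ is an isometry for the Euclidean metric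 and $\omega$ is a signed permutation. For a regular structure, define $\widetilde\sigma_j:[\pm n]\to[\pm n]$ by $\widetilde\sigma_j(\pm j)=\pm\omega(j)$ and, for $k\ne\pm j$, $\widetilde\sigma_j(k)$ is determined by $\tau_j(\mathbf{F}(j,k))=\mathbf{F}(\omega(j),\widetilde\sigma_j(k))$; each $\widetilde\sigma_j$ is a signed permutation. Two facets-pairing structures $(\omega,\{\tau_j\})$, $(\omega',\{\tau'_j\})$ are equivalent if there is a symmetry $h$ of $\mathcal{C}^n$ with $\tau_j=h^{-1}\circ\tau'_{j'}\circ h$ on $\mathbf{F}(j)$ for every $j$, where $\mathbf{F}(j')=h(\mathbf{F}(j))$. *)

From mathcomp Require Import all_boot.
From Stdlib Require Import Reals.
Set Implicit Arguments.
Unset Strict Implicit.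
Unset Printing Implicit Defensive.

Local Open Scope R_scope.

(* Signed indices [±n]: (i, true) stands for +(i+1), (i, false) for -(i+1). *)
Definition sidx (n : nat) : Type := ('I_n * bool)%type.
Definition sneg (n : nat) (j : sidx n) : sidx n := (j.1, ~~ j.2).
Definition sabs (n : nat) (j : sidx n) : 'I_n := j.1.

Definition pt (n : nat) : Type := 'I_n -> R.

Definition edist (n : nat) (x y : pt n) : R :=
  sqrt (\big[Rplus/0]_(i < n) ((x i - y i) ^ 2)).

Definition cube (n : nat) (x : pt n) : Prop :=
  forall i : 'I_n, - (1/4) <= x i <= 1/4.

Definition onfacet (n : nat) (j : sidx n) (x : pt n) : Prop :=
  x j.1 = (if j.2 then 1/4 else - (1/4)).

Definition face (n : nat) (l : seq (sidx n)) (x : pt n) : Prop :=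
  cube x /\ forall j, j \in l -> onfacet j x.

Definition facet (n : nat) (j : sidx n) : pt n -> Prop := face [:: j].

Definition abs_distinct (n : nat) (l : seq (sidx n)) : bool :=
  uniq (map (@sabs n) l).

Definition maps_onto (n : nat) (f : pt n -> pt n) (A B : pt n -> Prop) : Prop :=
  forall y, (exists x, A x /\ f x = y) <-> B y.

Definition continuous_on (n : nat) (A : pt n -> Prop) (f : pt n -> pt n) : Prop :=
  forall x, A x -> forall eps, 0 < eps -> exists delta, 0 < delta /\
    forall y, A y -> edist x y < delta -> edist (f x) (f y) < eps.

Definition face_preserving (n : nat) (f : pt n -> pt n) (j jw : sidx n) : Prop :=
  forall l, abs_distinct l -> j \in l ->
    exists l', abs_distinct l' /\ jw \in l' /\ maps_onto f (face l) (face l').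

Definition signed_perm (n : nat) (s : sidx n -> sidx n) : Prop :=
  bijective s /\ forall k, s (sneg k) = sneg (s k).

Definition facets_pairing (n : nat) (omega : sidx n -> sidx n)
    (tau : sidx n -> pt n -> pt n) : Prop :=
  (forall j, omega (omega j) = j) /\
  (forall j x, facet j x -> facet (omega j) (tau j x)) /\
  (forall j, continuous_on (facet j) (tau j)) /\
  (forall j, face_preserving (tau j) j (omega j)) /\
  (forall j x, facet j x -> tau (omega j) (tau j x) = x) /\
  (forall j k j' k',
     sabs j != sabs k -> sabs (omega j) != sabs k' -> sabs j' != sabs (omega k) ->
     maps_onto (tau j) (face [:: j; k]) (face [:: omega j; k']) ->
     maps_onto (tau k) (face [:: j; k]) (face [:: j'; omega k]) ->
     forall p, face [:: j; k] p -> tau k' (tau j p) = tau j' (tau k p)).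

Definition regular_fps (n : nat) (omega : sidx n -> sidx n)
    (tau : sidx n -> pt n -> pt n) : Prop :=
  facets_pairing omega tau /\ signed_perm omega /\
  (forall j x y, facet j x -> facet j y -> edist (tau j x) (tau j y) = edist x y).

Definition sigma_tilde (n : nat) (omega : sidx n -> sidx n)
    (tau : sidx n -> pt n -> pt n) (st : sidx n -> sidx n -> sidx n) : Prop :=
  forall j,
    st j j = omega j /\ st j (sneg j) = sneg (omega j) /\
    forall k, sabs k != sabs j ->
      maps_onto (tau j) (face [:: j; k]) (face [:: omega j; st j k]).

Definition cube_symmetry (n : nat) (h : pt n -> pt n) : Prop :=
  (forall x y, edist (h x) (h y) = edist x y) /\ maps_onto h (@cube n) (@cube n).

Definition fps_equivalent (n : nat)
    (omega : sidx n -> sidx n) (tau : sidx n -> pt n -> pt n)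
    (omega' : sidx n -> sidx n) (tau' : sidx n -> pt n -> pt n) : Prop :=
  exists h hinv : pt n -> pt n,
    cube_symmetry h /\ cancel h hinv /\ cancel hinv h /\
    forall j j', maps_onto h (facet j) (facet j') ->
      forall p, facet j p -> tau j p = hinv (tau' j' (h p)).

Definition shuffled_conjugate (n : nat)
    (omega : sidx n -> sidx n) (st : sidx n -> sidx n -> sidx n)
    (omega' : sidx n -> sidx n) (st' : sidx n -> sidx n -> sidx n) : Prop :=
  exists S Sinv : sidx n -> sidx n,
    signed_perm S /\ cancel S Sinv /\ cancel Sinv S /\
    (forall j, omega j = Sinv (omega' (S j))) /\
    (forall j k, st j k = Sinv (st' (S j) (S k))).

(* A symmetry h of the cube permutes its facets by a signed permutation S, and
   every signed permutation is realised by a signed coordinate permutation.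
   Conjugating [tau'] by h gives isometries F(j) -> F(S^-1 (omega' (S j))) that
   send F(j,k) onto F(S^-1 (omega' (S j)), S^-1 (st' (S j) (S k))); reading off
   facet and face images, equivalence yields shuffled conjugacy. Conversely the
   conjugate of [tau'] and [tau] then agree by rigidity: an isometry F(j) -> F(c)
   sending each face F(j,k) onto a prescribed face F(c, m k) is unique, since the
   distance of its value to the hyperplane of F(m k) equals the distance of the
   argument to that of F(k), and this fixes every coordinate. *)

From HB Require Import structures.
From mathcomp Require Import all_boot.
From Stdlib Require Import Reals Lra Classical ClassicalEpsilon FunctionalExtensionality.
Set Implicit Arguments.
Unset Strict Implicit.
Unset Printing Implicit Defensive.

HB.instance Definition _ := Monoid.isComLaw.Build R 0%R Rplus
  (fun a b c => esym (Rplus_assoc a b c)) Rplus_comm Rplus_0_l.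

Local Open Scope R_scope.

Lemma sumR_ge0 n (P : pred 'I_n) (F : 'I_n -> R) :
  (forall i, P i -> 0 <= F i) -> 0 <= \big[Rplus/0]_(i < n | P i) F i.
Proof. by move=> F_ge0; apply: big_ind => // *; lra. Qed.

Lemma sumR_le n (P : pred 'I_n) (F G : 'I_n -> R) :
  (forall i, P i -> F i <= G i) ->
  \big[Rplus/0]_(i < n | P i) F i <= \big[Rplus/0]_(i < n | P i) G i.
Proof. by move=> FG; apply: big_ind2 => // *; lra. Qed.

Lemma sumR_le_eq n (P : pred 'I_n) (F G : 'I_n -> R) :
  (forall i, P i -> F i <= G i) ->
  \big[Rplus/0]_(i < n | P i) F i = \big[Rplus/0]_(i < n | P i) G i ->
  forall i, P i -> F i = G i.
Proof.
move=> FG + i Pi; rewrite (bigD1 i Pi) (bigD1 (F := G) i Pi).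
set SF := \big[_/_]_(l < n | _) F l; set SG := \big[_/_]_(l < n | _) G l.
have : SF <= SG by apply: sumR_le => l /andP[/FG].
have : F i <= G i := FG i Pi.
rewrite /=; lra.
Qed.

Lemma sumR_const n (c : R) : \big[Rplus/0]_(i < n) c = INR n * c.
Proof.
rewrite big_const_ord; elim: n => [|n IH]; first by rewrite /=; ring.
by rewrite S_INR /= IH; ring.
Qed.

Definition sqdist n (x y : pt n) : R := \big[Rplus/0]_(i < n) (x i - y i) ^ 2.

Lemma sqdist_ge0 n (x y : pt n) : 0 <= sqdist x y.
Proof. by apply: sumR_ge0 => i _; apply: pow2_ge_0. Qed.

Lemma edist_eq n (x y x' y' : pt n) : edist x y = edist x' y' <-> sqdist x y = sqdist x' y'.
Proof.
split => [|E]; last by rewrite /edist -/(sqdist x y) E.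
by apply: sqrt_inj; apply: sqdist_ge0.
Qed.

Lemma sqdistD1 n (x y : pt n) i :
  sqdist x y = (x i - y i) ^ 2 + \big[Rplus/0]_(l < n | l != i) (x l - y l) ^ 2.
Proof. exact: bigD1. Qed.

Lemma sqdist1 n (x y : pt n) i :
  (forall l, l != i -> x l = y l) -> sqdist x y = (x i - y i) ^ 2.
Proof. by move=> xy; rewrite (sqdistD1 _ _ i) big1 ?Rplus_0_r // => l /xy ->; ring. Qed.

Definition level n (j : sidx n) : R := if j.2 then 1/4 else - (1/4).

Lemma onfacetE n (j : sidx n) x : onfacet j x <-> x j.1 = level j.
Proof. by []. Qed.

Lemma level_cases n (j : sidx n) : level j = 1/4 \/ level j = - (1/4).
Proof. by rewrite /level; case: j.2; [left | right]. Qed.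

Lemma level_range n (j : sidx n) : - (1/4) <= level j <= 1/4.
Proof. by case: (level_cases j) => ->; lra. Qed.

Lemma level_sq n (j : sidx n) : level j ^ 2 = 1/16.
Proof. by case: (level_cases j) => ->; field. Qed.

Lemma level_sneg n (j : sidx n) : level (sneg j) = - level j.
Proof. by rewrite /level /sneg /=; case: j.2 => /=; lra. Qed.

Lemma level_inj n (a b : sidx n) : a.1 = b.1 -> level a = level b -> a = b.
Proof.
case: a b => [ia []] [ib []] /= ->; rewrite /level /= => // E; lra.
Qed.

Lemma sidx_abs_eq n (a b : sidx n) : a.1 = b.1 -> a != b -> b = sneg a.
Proof. by case: a b => [ia []] [ib []] /= <-; rewrite /sneg //= eqxx. Qed.

Lemma sqdist_onfacet_ge n (x y : pt n) (k : sidx n) :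
  onfacet k y -> (x k.1 - level k) ^ 2 <= sqdist x y.
Proof.
rewrite onfacetE (sqdistD1 _ _ k.1) => ->.
suff : 0 <= \big[Rplus/0]_(l < n | l != k.1) (x l - y l) ^ 2 by lra.
by apply: sumR_ge0 => l _; apply: pow2_ge_0.
Qed.

Definition proj_facet n (x : pt n) (k : sidx n) : pt n :=
  fun l => if l == k.1 then level k else x l.

Definition origin n : pt n := fun _ => 0.

Section ProjFacet.
Variables (n : nat) (x : pt n) (k : sidx n).

Lemma proj_facet_on : onfacet k (proj_facet x k).
Proof. by rewrite onfacetE /proj_facet eqxx. Qed.

Lemma proj_facet_other l : l != k.1 -> proj_facet x k l = x l.
Proof. by rewrite /proj_facet => /negbTE ->. Qed.

Lemma onfacet_proj_facet j : j.1 != k.1 -> onfacet j x -> onfacet j (proj_facet x k).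
Proof. by rewrite !onfacetE => /proj_facet_other ->. Qed.

Lemma cube_proj_facet : cube x -> cube (proj_facet x k).
Proof.
by move=> x_cube l; rewrite /proj_facet; case: ifP => _; [apply: level_range | apply: x_cube].
Qed.

Lemma sqdist_proj_facet : sqdist x (proj_facet x k) = (x k.1 - level k) ^ 2.
Proof. by rewrite (sqdist1 (i := k.1)) ?proj_facet_on // => l /proj_facet_other ->. Qed.

End ProjFacet.

Lemma cube_origin n : cube (@origin n).
Proof. by move=> l; rewrite /origin; lra. Qed.

Lemma facetE n (j : sidx n) x : facet j x <-> cube x /\ onfacet j x.
Proof.
split=> [[x_cube /(_ j)] | [x_cube x_on]]; first by rewrite mem_seq1 eqxx; auto.
by split=> // l; rewrite mem_seq1 => /eqP ->.
Qed.

Lemma face2E n (a b : sidx n) x :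
  face [:: a; b] x <-> cube x /\ onfacet a x /\ onfacet b x.
Proof.
split=> [[x_cube x_on] | [x_cube [xa xb]]].
  by split=> //; split; apply: x_on; rewrite !inE eqxx ?orbT.
by split=> // l; rewrite !inE => /orP[] /eqP ->.
Qed.

Lemma face2_facet n (a b : sidx n) x : face [:: a; b] x <-> facet a x /\ facet b x.
Proof. by rewrite face2E !facetE; split=> [[? []] | [[? ?] []]]. Qed.

Lemma face2_facetl n (a b : sidx n) x : face [:: a; b] x -> facet a x.
Proof. by case/face2_facet. Qed.

Lemma facet_proj_facet n (x : pt n) k : cube x -> facet k (proj_facet x k).
Proof. by move=> x_cube; apply/facetE; split; [apply: cube_proj_facet | apply: proj_facet_on]. Qed.

Lemma facet_proj_facet_other n (x : pt n) j k :
  k.1 != j.1 -> facet j x -> facet j (proj_facet x k).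
Proof.
move=> kj /facetE[x_cube x_on]; apply/facetE; split; first exact: cube_proj_facet.
by apply: onfacet_proj_facet; rewrite // eq_sym.
Qed.

Lemma face2_level n (c d : sidx n) y : face [:: c; d] y -> c.1 = d.1 -> level c = level d.
Proof. by case/face2E => _ []; rewrite !onfacetE => <- <- ->. Qed.

Lemma face2_proj_facet n (c d : sidx n) x :
  facet c x -> (c.1 = d.1 -> level c = level d) -> face [:: c; d] (proj_facet x d).
Proof.
case/facetE => x_cube x_on cd; apply/face2E; split; first exact: cube_proj_facet.
split; last exact: proj_facet_on.
have [cd1 | /onfacet_proj_facet] := eqVneq c.1 d.1; last exact.
by rewrite onfacetE /proj_facet cd1 eqxx cd.
Qed.

Lemma facet_inj n (a b : sidx n) : (forall y, facet a y <-> facet b y) -> a = b.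
Proof.
move=> ab; have /ab /facetE[_] := facet_proj_facet a (@cube_origin n).
rewrite onfacetE /proj_facet; case: eqP => [ba | _]; first exact: level_inj (esym ba).
by rewrite /origin => /esym; case: (level_cases b) => ->; lra.
Qed.

Lemma facet_disjoint n (a b : sidx n) : (forall y, ~ (facet a y /\ facet b y)) -> b = sneg a.
Proof.
move=> ab; have [ab1 | ab1] := eqVneq a.1 b.1.
  apply: sidx_abs_eq => //; apply/eqP => eq_ab; subst b.
  by apply: (ab (proj_facet (@origin n) a)); split; apply: facet_proj_facet; apply: cube_origin.
exfalso; apply: (ab (proj_facet (proj_facet (@origin n) a) b)); apply/face2_facet.
apply: face2_proj_facet => [|/eqP]; last by rewrite (negbTE ab1).
by apply: facet_proj_facet; apply: cube_origin.
Qed.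

Lemma face2_inj n (c a b : sidx n) y :
  face [:: c; a] y -> (forall y, face [:: c; a] y <-> face [:: c; b] y) -> a = b.
Proof.
move=> y_on ab.
have corner d : face [:: c; d] y -> face [:: c; d] (proj_facet (proj_facet (@origin n) c) d).
  move=> /face2_level cd; apply: face2_proj_facet => //.
  by apply: facet_proj_facet; apply: cube_origin.
have /ab /face2E[_ [_]] := corner a y_on.
have /ab /corner /ab /face2E[_ [_]] := y_on.
rewrite !onfacetE /proj_facet.
have [ab1 _ | ab1] := eqVneq a.1 b.1; first exact: level_inj.
rewrite /origin.
case: eqP => [ac _ | _ a0 _]; last by exfalso; case: (level_cases a) a0 => ->; lra.
case: eqP => [bc _ | _ b0]; last by exfalso; case: (level_cases b) b0 => ->; lra.
by move: ab1; rewrite ac bc eqxx.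
Qed.

Section MapsOnto.
Variable n : nat.
Implicit Types (f g : pt n -> pt n) (A B C : pt n -> Prop).

Lemma maps_onto_comp f g A B C :
  maps_onto f A B -> maps_onto g B C -> maps_onto (fun x => g (f x)) A C.
Proof.
move=> fAB gBC y; split=> [[x [Ax <-]] | /gBC[z [/fAB[x [Ax <-]] <-]]]; last by exists x.
by apply/gBC; exists (f x); split=> //; apply/fAB; exists x.
Qed.

Lemma eq_in_maps_onto f g A B :
  (forall x, A x -> f x = g x) -> maps_onto f A B -> maps_onto g A B.
Proof.
move=> fg fAB y; split=> [[x [Ax <-]] | /fAB[x [Ax <-]]]; last by exists x; rewrite fg.
by rewrite -fg //; apply/fAB; exists x.
Qed.

Lemma maps_onto_uniq f A B C : maps_onto f A B -> maps_onto f A C -> forall y, B y <-> C y.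
Proof. by move=> fAB fAC y; rewrite -fAB -fAC. Qed.

Lemma maps_onto_can f g A B :
  cancel f g -> cancel g f -> maps_onto f A B -> maps_onto g B A.
Proof.
move=> fK gK fAB y; split=> [[x [/fAB[z [Az <-]] <-]] | Ay]; first by rewrite fK.
by exists (f y); split; [apply/fAB; exists y | rewrite fK].
Qed.

Lemma maps_onto_face2 f a b a' b' :
  injective f -> maps_onto f (facet a) (facet a') -> maps_onto f (facet b) (facet b') ->
  maps_onto f (face [:: a; b]) (face [:: a'; b']).
Proof.
move=> f_inj fa fb y; rewrite face2_facet -fa -fb.
split=> [[x [/face2_facet[xa xb] <-]] | [[x1 [x1a <-]] [x2 [x2b /f_inj x21]]]].
  by split; exists x.
by exists x1; split=> //; apply/face2_facet; split=> //; rewrite -x21.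
Qed.

End MapsOnto.

Section FacetIsometry.
Variables (n : nat) (j c : sidx n) (m : sidx n -> sidx n) (f : pt n -> pt n).
Hypothesis f_iso : forall x y, facet j x -> facet j y -> sqdist (f x) (f y) = sqdist x y.
Hypothesis f_facet : forall x, facet j x -> facet c (f x).
Hypothesis f_face :
  forall k, k.1 != j.1 -> maps_onto f (face [:: j; k]) (face [:: c; m k]).

(* Both sides are the squared distance to the face F(j,k), resp. F(c,m k),
   which [f] maps isometrically onto each other. *)
Lemma facet_iso_level p k : facet j p -> k.1 != j.1 ->
  (f p (m k).1 - level (m k)) ^ 2 = (p k.1 - level k) ^ 2.
Proof.
move=> p_j kj.
have pk_jk : face [:: j; k] (proj_facet p k).
  by apply: face2_proj_facet => // /eqP; rewrite eq_sym (negbTE kj).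
have /(f_face kj) fpk_cmk : exists x, face [:: j; k] x /\ f x = f (proj_facet p k).
  by exists (proj_facet p k).
have /(f_face kj)[p' [p'_jk fp']] : face [:: c; m k] (proj_facet (f p) (m k)).
  by apply: face2_proj_facet; [exact: f_facet | exact: face2_level fpk_cmk].
have /face2E[_ [_ fpk_on]] := fpk_cmk; have /face2E[_ [_ p'_on]] := p'_jk.
apply: Rle_antisym.
- have pk_j := face2_facetl pk_jk.
  by rewrite -[(p _ - _) ^ 2]sqdist_proj_facet -f_iso //; apply: sqdist_onfacet_ge.
- have p'_j := face2_facetl p'_jk.
  by rewrite -[(f p _ - _) ^ 2]sqdist_proj_facet -fp' f_iso //; apply: sqdist_onfacet_ge.
Qed.

Lemma facet_iso_onfacet p k : facet j p -> k.1 != j.1 -> onfacet k p -> onfacet (m k) (f p).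
Proof.
move=> p_j kj /onfacetE p_on; apply/onfacetE.
have := facet_iso_level p_j kj; rewrite p_on Rminus_diag; nra.
Qed.

Lemma facet_iso_not_onfacet p k :
  facet j p -> k.1 != j.1 -> onfacet (sneg k) p -> ~ onfacet (m k) (f p).
Proof.
move=> p_j kj /onfacetE p_on /onfacetE fp_on.
have := facet_iso_level p_j kj; rewrite p_on fp_on level_sneg Rminus_diag.
by have := level_sq k; nra.
Qed.

(* Both proofs below exhibit points of F(j,k) and of F(j,-k) whose images are
   forced into the hyperplane of F(m k), contradicting [facet_iso_not_onfacet]. *)
Lemma facet_iso_abs_neq k : k.1 != j.1 -> (m k).1 != c.1.
Proof.
move=> kj; apply/eqP => mkc.
set q := proj_facet (@origin n) j.
have proj_j d : d.1 != j.1 -> facet j (proj_facet q d).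
  by move=> dj; apply: facet_proj_facet_other dj _; apply: facet_proj_facet; apply: cube_origin.
have onc d : d.1 != j.1 -> f (proj_facet q d) c.1 = level c.
  by move=> /proj_j /f_facet /facetE[_].
apply: (facet_iso_not_onfacet (proj_j (sneg k) kj) kj (proj_facet_on _ _)).
apply/onfacetE; rewrite mkc (onc (sneg k) kj).
have := facet_iso_onfacet (proj_j _ kj) kj (proj_facet_on _ _).
by rewrite onfacetE mkc onc.
Qed.

Lemma facet_iso_abs_inj k1 k2 :
  k1.1 != j.1 -> k2.1 != j.1 -> k1.1 != k2.1 -> (m k1).1 != (m k2).1.
Proof.
move=> k1j k2j k12; apply/eqP => mk12.
set q := proj_facet (proj_facet (@origin n) j) k1.
have proj_j d : d.1 != j.1 -> facet j (proj_facet q d).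
  move=> dj; do 2 apply: facet_proj_facet_other => //.
  by apply: facet_proj_facet; apply: cube_origin.
have onk1 d : d.1 = k2.1 -> onfacet (m k1) (f (proj_facet q d)).
  move=> dk2; apply: facet_iso_onfacet k1j _; first by apply: proj_j; rewrite dk2.
  by apply: onfacet_proj_facet; [rewrite dk2 | apply: proj_facet_on].
apply: (facet_iso_not_onfacet (proj_j (sneg k2) k2j) k2j (proj_facet_on _ _)).
have := onk1 _ erefl; have := onk1 (sneg k2) erefl.
rewrite !onfacetE -mk12 => ->.
have := facet_iso_onfacet (proj_j _ k2j) k2j (proj_facet_on _ _).
by rewrite onfacetE -mk12 => ->.
Qed.

Lemma facet_iso_abs_onto i : i != c.1 -> exists2 k : sidx n, k.1 != j.1 & (m k).1 = i.
Proof.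
pose phi l := if l == j.1 then c.1 else (m (l, true)).1.
have phi_inj : injective phi.
  move=> l1 l2; rewrite /phi.
  have [-> | l1j] := eqVneq l1 j.1; have [-> | l2j] := eqVneq l2 j.1 => // E.
  - by have := facet_iso_abs_neq (k := (l2, true)) l2j; rewrite E eqxx.
  - by have := facet_iso_abs_neq (k := (l1, true)) l1j; rewrite -E eqxx.
  apply/eqP; apply: contraT => l12.
  by have := facet_iso_abs_inj (k1 := (l1, true)) (k2 := (l2, true)) l1j l2j l12; rewrite E eqxx.
have [phi' phiK phi'K] := injF_bij phi_inj.
move=> ic; set l := phi' i; have phil : phi l = i := phi'K i.
have lj : l != j.1 by apply: contra_neq ic => lj; rewrite -phil /phi lj eqxx.
by exists (l, true); last by move: phil; rewrite /phi (negbTE lj).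
Qed.

End FacetIsometry.

Lemma sqr_sub_level_inj n (d : sidx n) x y : - (1/4) <= x <= 1/4 -> - (1/4) <= y <= 1/4 ->
  (x - level d) ^ 2 = (y - level d) ^ 2 -> x = y.
Proof.
move=> x_range y_range E.
have : (x - y) * (x + y - 2 * level d) = 0 by rewrite -[LHS]Rplus_0_r; nra.
by case/Rmult_integral => ?; [lra | case: (level_cases d) => ?; lra].
Qed.

Lemma facet_isometry_unique n (j c : sidx n) (m : sidx n -> sidx n) (f g : pt n -> pt n) :
  (forall x y, facet j x -> facet j y -> sqdist (f x) (f y) = sqdist x y) ->
  (forall x, facet j x -> facet c (f x)) ->
  (forall k, k.1 != j.1 -> maps_onto f (face [:: j; k]) (face [:: c; m k])) ->
  (forall x y, facet j x -> facet j y -> sqdist (g x) (g y) = sqdist x y) ->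
  (forall x, facet j x -> facet c (g x)) ->
  (forall k, k.1 != j.1 -> maps_onto g (face [:: j; k]) (face [:: c; m k])) ->
  forall p, facet j p -> f p = g p.
Proof.
move=> f_iso f_facet f_face g_iso g_facet g_face p p_j.
have /f_facet /facetE[fp_cube /onfacetE fp_on] := p_j.
have /g_facet /facetE[gp_cube /onfacetE gp_on] := p_j.
apply: functional_extensionality => i; have [-> | ic] := eqVneq i c.1.
  by rewrite fp_on gp_on.
have [k kj <-] := facet_iso_abs_onto f_iso f_facet f_face ic.
apply: (sqr_sub_level_inj (d := m k)) => //.
by rewrite (facet_iso_level f_iso f_facet f_face) // (facet_iso_level g_iso g_facet g_face).
Qed.

Definition sign (b : bool) : R := if b then 1 else -1.

Definition sperm_map n (P : sidx n -> sidx n) (x : pt n) : pt n :=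
  fun i => sign (P (i, true)).2 * x (P (i, true)).1.

Section SignedPermMap.
Variables (n : nat) (P Q : sidx n -> sidx n).
Hypotheses (PK : cancel P Q) (QK : cancel Q P) (P_sneg : forall k, P (sneg k) = sneg (P k)).

Lemma sperm_inv_sneg k : Q (sneg k) = sneg (Q k).
Proof. by apply: (can_inj PK); rewrite P_sneg !QK. Qed.

Lemma sperm_abs_inj : injective (fun i : 'I_n => (P (i, true)).1).
Proof.
move=> a b /= ab; have [/(can_inj PK)[] // | Pab] := eqVneq (P (a, true)) (P (b, true)).
by move: (sidx_abs_eq ab Pab); rewrite -P_sneg => /(can_inj PK)[].
Qed.

Lemma sqdist_sperm_map x y : sqdist (sperm_map P x) (sperm_map P y) = sqdist x y.
Proof.
rewrite /sqdist [RHS](reindex_inj sperm_abs_inj); apply: eq_bigr => i _.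
by rewrite /sperm_map /sign; case: (P (i, true)).2; ring.
Qed.

Lemma cube_sperm_map x : cube x -> cube (sperm_map P x).
Proof.
by move=> x_cube i; have := x_cube (P (i, true)).1; rewrite /sperm_map /sign; case: (P _).2; lra.
Qed.

Lemma onfacet_sperm_map k x : onfacet k x -> onfacet (Q k) (sperm_map P x).
Proof.
rewrite !onfacetE /sperm_map; case Qk: (Q k) => [i []] x_on /=.
  by rewrite -Qk QK x_on Qk /sign /level /=; case: k.2; ring.
have -> : (i, true) = sneg (Q k) by rewrite Qk.
by rewrite P_sneg QK /sneg /= x_on /level /sign; case: k.2 => /=; ring.
Qed.

Lemma sperm_mapK : cancel (sperm_map Q) (sperm_map P).
Proof.
move=> x; apply: functional_extensionality => i; rewrite /sperm_map.
case Pi: (P (i, true)) => [a []] /=.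
  by rewrite -Pi PK /sign /=; ring.
have -> : (a, true) = sneg (P (i, true)) by rewrite Pi.
by rewrite sperm_inv_sneg PK /sign /=; ring.
Qed.

End SignedPermMap.

Lemma sperm_map_facet n (P Q : sidx n -> sidx n) :
  cancel P Q -> cancel Q P -> (forall k, P (sneg k) = sneg (P k)) ->
  forall a, maps_onto (sperm_map P) (facet a) (facet (Q a)).
Proof.
move=> PK QK P_sneg a y; split=> [[x [/facetE[x_cube x_on] <-]] | /facetE[y_cube y_on]].
  by apply/facetE; split; [apply: cube_sperm_map | apply: onfacet_sperm_map].
have Q_sneg := sperm_inv_sneg PK QK P_sneg.
exists (sperm_map Q y); split; last exact: sperm_mapK.
apply/facetE; split; first exact: cube_sperm_map.
by rewrite -[a]QK; apply: onfacet_sperm_map.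
Qed.

Definition vertex n (v : pt n) : Prop := forall l, v l = 1/4 \/ v l = - (1/4).

Definition antipode n (x : pt n) : pt n := fun l => - x l.

Lemma cube_vertex n (v : pt n) : vertex v -> cube v.
Proof. by move=> v_vert l; case: (v_vert l) => ->; lra. Qed.

Lemma vertex_antipode n (v : pt n) : vertex v -> vertex (antipode v).
Proof. by move=> v_vert l; rewrite /antipode; case: (v_vert l) => ->; [right | left]; lra. Qed.

Lemma sqdist_antipode n (v : pt n) : vertex v -> sqdist v (antipode v) = INR n / 4.
Proof.
move=> v_vert; rewrite /sqdist (eq_bigr (fun _ => 1/4)) ?sumR_const; first by field.
by move=> i _; rewrite /antipode; case: (v_vert i) => ->; field.
Qed.

Lemma cube_diameter_vertex n (v w : pt n) :
  cube v -> cube w -> sqdist v w = INR n / 4 -> vertex v.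
Proof.
move=> v_cube w_cube vw.
have vw_far i : (v i - w i) ^ 2 = 1/4.
  apply: (sumR_le_eq (P := predT) (F := fun i => (v i - w i) ^ 2) (G := fun _ => 1/4)) => //.
    by move=> l _; have := v_cube l; have := w_cube l; nra.
  by rewrite -/(sqdist v w) vw sumR_const; field.
move=> l; have := vw_far l; have := v_cube l; have := w_cube l => w_l v_l vw_l.
have : (v l - w l - 1/2) * (v l - w l + 1/2) = 0 by nra.
by case/Rmult_integral => ?; lra.
Qed.

Lemma vertex_adjacent n (a b : pt n) : vertex a -> vertex b -> sqdist a b = 1/4 ->
  exists i, a i = - b i /\ forall l, l != i -> a l = b l.
Proof.
move=> a_vert b_vert ab.
have [[i abi] | ab_eq] := classic (exists i, a i <> b i); last first.
  suff : sqdist a b = 0 by lra.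
  rewrite /sqdist big1 // => l _; have -> : a l = b l; last by ring.
  by apply: NNPP => abl; apply: ab_eq; exists l.
have ab_opp : a i = - b i by case: (a_vert i) => ?; case: (b_vert i) => ?; lra.
exists i; split=> // l li; move: ab; rewrite (sqdistD1 _ _ i) ab_opp => ab.
have rest0 : \big[Rplus/0]_(l < n | l != i) (a l - b l) ^ 2 = 0.
  by case: (b_vert i) ab => ->; rewrite /=; lra.
have := sumR_le_eq (P := fun l => l != i) (F := fun _ => 0)
  (G := fun l => (a l - b l) ^ 2) (fun l _ => pow2_ge_0 _).
by rewrite rest0 big1 // => /(_ erefl l li); nra.
Qed.

Lemma onfacet_sqdist_sub n (j : sidx n) (a b x : pt n) :
  a j.1 = level j -> b j.1 = - level j -> (forall l, l != j.1 -> a l = b l) ->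
  onfacet j x <-> sqdist x b - sqdist x a = 1/4.
Proof.
move=> a_on b_on ab; rewrite onfacetE (sqdistD1 x b j.1) (sqdistD1 x a j.1) a_on b_on.
rewrite (eq_bigr (fun l => (x l - a l) ^ 2)); last by move=> l /ab ->.
set rest := \big[_/_]_(l < n | _) _.
have -> : (x j.1 - - level j) ^ 2 + rest - ((x j.1 - level j) ^ 2 + rest) = 4 * level j * x j.1.
  by rewrite /=; ring.
by case: (level_cases j) => ->; split; lra.
Qed.

Lemma maps_onto_inj_dom n (f : pt n -> pt n) (A B C : pt n -> Prop) :
  injective f -> maps_onto f A C -> maps_onto f B C -> forall x, A x <-> B x.
Proof.
move=> f_inj fAC fBC x; split=> [Ax | Bx].
  by have /fBC[y [By /f_inj <-]] : C (f x) by apply/fAC; exists x.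
by have /fAC[y [Ay /f_inj <-]] : C (f x) by apply/fBC; exists x.
Qed.

Lemma facet_sneg_disjoint n (k : sidx n) x : ~ (facet k x /\ facet (sneg k) x).
Proof.
case=> /facetE[_ /onfacetE x_on] /facetE[_ /onfacetE]; rewrite x_on level_sneg.
by case: (level_cases k) => ->; lra.
Qed.

Section CubeSymmetry.
Variables (n : nat) (h hinv : pt n -> pt n).
Hypotheses (h_sym : cube_symmetry h) (hK : cancel h hinv) (hinvK : cancel hinv h).

Let h_sqdist x y : sqdist (h x) (h y) = sqdist x y.
Proof. by apply/edist_eq; case: h_sym. Qed.

Let h_cube x : cube x -> cube (h x).
Proof. by case: h_sym => _ cube_cube x_cube; apply/cube_cube; exists x. Qed.

Let hinv_cube y : cube y -> cube (hinv y).
Proof. by case: h_sym => _ cube_cube /cube_cube[x [x_cube <-]]; rewrite hK. Qed.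

Lemma cube_symmetry_vertex v : vertex v -> vertex (h v).
Proof.
move=> v_vert; apply: (cube_diameter_vertex (w := h (antipode v))).
- exact/h_cube/cube_vertex.
- exact/h_cube/cube_vertex/vertex_antipode.
- by rewrite h_sqdist sqdist_antipode.
Qed.

(* The hyperplane of F(j) is the locus [sqdist x u' - sqdist x u = 1/4] for two
   vertices [u], [u'] adjacent across it; [h] maps vertices to vertices, hence
   this locus to the corresponding one of [h u], [h u']. *)
Lemma cube_symmetry_facet j : exists j', maps_onto h (facet j) (facet j').
Proof.
pose u : pt n := fun l => if l == j.1 then level j else 1/4.
pose u' : pt n := fun l => if l == j.1 then - level j else 1/4.
have u_vert : vertex u by move=> l; rewrite /u; case: ifP => _; [apply: level_cases | left].
have u'_vert : vertex u'.
  by move=> l; rewrite /u'; case: ifP => _; [case: (level_cases j) => ->; lra | left].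
have uu'_other l : l != j.1 -> u l = u' l by rewrite /u /u' => /negbTE ->.
have hu_adj : sqdist (h u) (h u') = 1/4.
  rewrite h_sqdist (sqdist1 (i := j.1)) // /u /u' eqxx.
  by case: (level_cases j) => ->; field.
have [i [hu_i hu_other]] :=
  vertex_adjacent (cube_symmetry_vertex u_vert) (cube_symmetry_vertex u'_vert) hu_adj.
have [j' [ji hu_j']] : exists j' : sidx n, j'.1 = i /\ h u i = level j'.
  by case: (cube_symmetry_vertex u_vert i) => ?; [exists (i, true) | exists (i, false)].
subst i.
have on_j x : onfacet j x <-> sqdist x u' - sqdist x u = 1/4.
  by apply: onfacet_sqdist_sub => //; rewrite /u /u' eqxx.
have on_j' y : onfacet j' y <-> sqdist y (h u') - sqdist y (h u) = 1/4.
  by apply: onfacet_sqdist_sub => //; rewrite -hu_j' hu_i; lra.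
exists j' => y; split=> [[x [/facetE[x_cube x_on] <-]] | /facetE[y_cube y_on]].
  by apply/facetE; split; [exact: h_cube | apply/on_j'; rewrite !h_sqdist -on_j].
exists (hinv y); split; last exact: hinvK.
apply/facetE; split; first exact: hinv_cube.
by apply/on_j; rewrite -(h_sqdist (hinv y) u') -(h_sqdist (hinv y) u) hinvK -on_j'.
Qed.

Lemma cube_symmetry_signed_perm :
  exists S, signed_perm S /\ forall j, maps_onto h (facet j) (facet (S j)).
Proof.
have h_inj : injective h := can_inj hK.
pose S j := proj1_sig (constructive_indefinite_description _ (cube_symmetry_facet j)).
have h_facet j : maps_onto h (facet j) (facet (S j)).
  by rewrite /S; case: constructive_indefinite_description.
exists S; split=> //; split.
  apply: injF_bij => a b Sab; apply: facet_inj => x.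
  by apply: (maps_onto_inj_dom h_inj (h_facet a)); rewrite Sab.
move=> k; apply: facet_disjoint => y [/h_facet[x [x_k <-]] /h_facet[x' [x'_k /h_inj x'x]]].
by apply: (@facet_sneg_disjoint _ k x); rewrite -{2}x'x.
Qed.

End CubeSymmetry.

Lemma signed_perm_abs_neq n (S : sidx n -> sidx n) :
  signed_perm S -> forall j k, k.1 != j.1 -> (S k).1 != (S j).1.
Proof.
case=> [[Sinv SK _] S_sneg] j k; apply: contra_neq => Skj.
have [Sjk | Sjk] := eqVneq (S j) (S k); first by rewrite (can_inj SK Sjk).
by move: (sidx_abs_eq (esym Skj) Sjk); rewrite -S_sneg => /(can_inj SK) ->.
Qed.

Lemma facets_pairing_facet n omega (tau : sidx n -> pt n -> pt n) :
  facets_pairing omega tau -> forall j, maps_onto (tau j) (facet j) (facet (omega j)).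
Proof.
case=> omegaK [tau_facet [_ [_ [tauK _]]]] j y; split=> [[x [x_j <-]] | y_oj].
  exact: tau_facet.
exists (tau (omega j) y); split; last by have := tauK _ _ y_oj; rewrite omegaK.
by have := tau_facet _ _ y_oj; rewrite omegaK.
Qed.

Section Conjugation.
Variables (n : nat) (h hinv : pt n -> pt n) (S Sinv : sidx n -> sidx n).
Hypotheses (hK : cancel h hinv) (hinvK : cancel hinv h).
Hypotheses (S_sperm : signed_perm S) (SinvK : cancel Sinv S).
Hypothesis h_facet : forall a, maps_onto h (facet a) (facet (S a)).
Variables (omega' : sidx n -> sidx n) (tau' : sidx n -> pt n -> pt n).
Variable st' : sidx n -> sidx n -> sidx n.
Hypotheses (fps' : facets_pairing omega' tau') (st'_spec : sigma_tilde omega' tau' st').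

Definition conj_pairing j x := hinv (tau' (S j) (h x)).

Lemma hinv_facet a : maps_onto hinv (facet a) (facet (Sinv a)).
Proof. by apply: (maps_onto_can hK hinvK); rewrite -{2}[a]SinvK. Qed.

Lemma conj_pairing_facet j :
  maps_onto (conj_pairing j) (facet j) (facet (Sinv (omega' (S j)))).
Proof.
apply: maps_onto_comp (hinv_facet _).
exact: maps_onto_comp (h_facet j) (facets_pairing_facet fps' (S j)).
Qed.

Lemma conj_pairing_face2 j k : k.1 != j.1 ->
  maps_onto (conj_pairing j) (face [:: j; k])
    (face [:: Sinv (omega' (S j)); Sinv (st' (S j) (S k))]).
Proof.
move=> kj; have [_ [_ st'_face]] := st'_spec (S j).
apply: maps_onto_comp (maps_onto_face2 (can_inj hinvK) (hinv_facet _) (hinv_facet _)).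
apply: maps_onto_comp (st'_face _ (signed_perm_abs_neq S_sperm kj)).
exact: maps_onto_face2 (can_inj hK) (h_facet j) (h_facet k).
Qed.

End Conjugation.

Lemma maps_onto_face2_inj n (f : pt n -> pt n) (j k c a b : sidx n) : k.1 != j.1 ->
  maps_onto f (face [:: j; k]) (face [:: c; a]) ->
  maps_onto f (face [:: j; k]) (face [:: c; b]) -> a = b.
Proof.
move=> kj fa fb; apply: face2_inj (maps_onto_uniq fa fb).
apply/fa; exists (proj_facet (proj_facet (@origin n) j) k); split=> //.
apply: face2_proj_facet => [|/eqP]; last by rewrite eq_sym (negbTE kj).
by apply: facet_proj_facet; apply: cube_origin.
Qed.

Lemma shuffled_conjugate_fps_equivalent n omega (tau : sidx n -> pt n -> pt n)
    omega' tau' st st' :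
  regular_fps omega tau -> regular_fps omega' tau' ->
  sigma_tilde omega tau st -> sigma_tilde omega' tau' st' ->
  shuffled_conjugate omega st omega' st' -> fps_equivalent omega tau omega' tau'.
Proof.
move=> [fps [_ tau_iso]] [fps' [_ tau'_iso]] st_spec st'_spec.
case=> S [Sinv [S_sperm [SK [SinvK [omegaE stE]]]]].
have S_sneg := S_sperm.2; have Sinv_sneg := sperm_inv_sneg SK SinvK S_sneg.
have hK : cancel (sperm_map Sinv) (sperm_map S) := sperm_mapK SK SinvK S_sneg.
have hinvK : cancel (sperm_map S) (sperm_map Sinv) := sperm_mapK SinvK SK Sinv_sneg.
have h_facet := sperm_map_facet SinvK SK Sinv_sneg.
have h_sqdist x y : sqdist (sperm_map Sinv x) (sperm_map Sinv y) = sqdist x y.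
  exact: sqdist_sperm_map SinvK Sinv_sneg x y.
have hinv_sqdist x y : sqdist (sperm_map S x) (sperm_map S y) = sqdist x y.
  exact: sqdist_sperm_map SK S_sneg x y.
exists (sperm_map Sinv), (sperm_map S); split; last split=> //; last split=> //.
  split=> [x y | y]; first exact/edist_eq.
  split=> [[x [x_cube <-]] | y_cube]; first exact: cube_sperm_map.
  by exists (sperm_map S y); split; [apply: cube_sperm_map | apply: hinvK].
move=> j j' hjj'; have -> : j' = S j.
  by apply: facet_inj => y; apply: maps_onto_uniq hjj' (h_facet j) y.
have [_ [_ st_face]] := st_spec j.
have tau_sqdist x y : facet j x -> facet j y -> sqdist (tau j x) (tau j y) = sqdist x y.
  by move=> xj yj; apply/edist_eq/tau_iso.
have conj_sqdist x y : facet j x -> facet j y ->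
    sqdist (sperm_map S (tau' (S j) (sperm_map Sinv x)))
           (sperm_map S (tau' (S j) (sperm_map Sinv y))) = sqdist x y.
  move=> xj yj; rewrite hinv_sqdist -[sqdist x y]h_sqdist; apply/edist_eq.
  by apply: tau'_iso; apply/h_facet; [exists x | exists y].
apply: (facet_isometry_unique tau_sqdist _ st_face conj_sqdist).
- by move=> x xj; apply/(facets_pairing_facet fps); exists x.
- by move=> x xj; rewrite omegaE; apply/(conj_pairing_facet hK hinvK SinvK h_facet fps'); exists x.
- move=> k kj; rewrite omegaE stE.
  exact: (conj_pairing_face2 hK hinvK S_sperm SinvK h_facet st'_spec kj).
Qed.

Lemma fps_equivalent_shuffled_conjugate n omega (tau : sidx n -> pt n -> pt n)
    omega' tau' st st' :
  regular_fps omega tau -> regular_fps omega' tau' ->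
  sigma_tilde omega tau st -> sigma_tilde omega' tau' st' ->
  fps_equivalent omega tau omega' tau' -> shuffled_conjugate omega st omega' st'.
Proof.
move=> [fps _] [fps' _] st_spec st'_spec [h [hinv [h_sym [hK [hinvK tauE]]]]].
have [S [S_sperm h_facet]] := cube_symmetry_signed_perm h_sym hK hinvK.
have [Sinv SK SinvK] := S_sperm.1; have S_sneg := S_sperm.2.
have conjE j x : facet j x -> conj_pairing h hinv S tau' j x = tau j x.
  by move=> xj; rewrite (tauE j (S j) (h_facet j)).
have omegaE j : omega j = Sinv (omega' (S j)).
  apply: facet_inj => y; apply: (maps_onto_uniq (facets_pairing_facet fps j)).
  exact: eq_in_maps_onto (conjE j) (conj_pairing_facet hK hinvK SinvK h_facet fps' j).
exists S, Sinv; do 4 split=> //; move=> j k.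
have [stjj [stjn st_face]] := st_spec j; have [st'jj [st'jn _]] := st'_spec (S j).
have [-> | kj] := eqVneq k j; first by rewrite stjj st'jj omegaE.
have [-> | kjn] := eqVneq k (sneg j).
  by rewrite stjn S_sneg st'jn (sperm_inv_sneg SK SinvK S_sneg) omegaE.
have kj1 : k.1 != j.1.
  by apply: contra_neq kjn => kj1; apply: sidx_abs_eq; rewrite // eq_sym.
apply: (maps_onto_face2_inj kj1 (st_face k kj1)); rewrite omegaE.
exact: eq_in_maps_onto (fun x xjk => conjE j x (face2_facetl xjk))
  (conj_pairing_face2 hK hinvK S_sperm SinvK h_facet st'_spec kj1).
Qed.

Theorem mainTheorem2 (n : nat)
    (omega : sidx n -> sidx n) (tau : sidx n -> pt n -> pt n)
    (omega' : sidx n -> sidx n) (tau' : sidx n -> pt n -> pt n)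
    (st st' : sidx n -> sidx n -> sidx n) :
  regular_fps omega tau -> regular_fps omega' tau' ->
  sigma_tilde omega tau st -> sigma_tilde omega' tau' st' ->
  (fps_equivalent omega tau omega' tau' <-> shuffled_conjugate omega st omega' st').
Proof.
move=> reg reg' st_spec st'_spec; split.
  exact: fps_equivalent_shuffled_conjugate.
exact: shuffled_conjugate_fps_equivalent.
Qed.
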